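(* Let $k\ge 3$ be odd and let $G=(V,E)$ be a $k$-uniform hyperstar of size $d\ge 2$, with $V=[n]$, $E=\{e_1,\ldots,e_d\}$, and heart the vertex $1$. Let $\mathcal L$ be its Laplacian tensor and, for $r=0,1,\ldots,d$, let $f_r(\lambda)=(\lambda-d)(1-\lambda)^{k-1}+r$. Then: (1) A real number $\lambda\neq 1$ is an H-eigenvalue of $\mathcal L$ if and only if it is a real root of $f_r$ for some $r\in\{0,1,\ldots,d\}$. (2) If $\lambda\neq1$ is a real root of $f_r$, then, up to a nonzero constant multiple, the H-eigenvectors of $\mathcal L$ corresponding to $\lambda$ are exactly the vectors $\mathbf x$ obtained as follows: take $x_1=1-\lambda$; choose any $r$ edges of $G$ and set $x_j=1$ for every vertex $j\neq 1$ lying in one of these $r$ edges; set $x_j=0$ for all other vertices $j$.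
   Context: A $k$-uniform hyperstar of size $d$ is a hypergraph whose vertex set is a disjoint union $V=V_0\cup V_1\cup\cdots\cup V_d$ with $|V_0|=1$, $|V_1|=\cdots=|V_d|=k-1$, and edge set $\{V_0\cup V_i: i\in[d]\}$; the vertex in $V_0$ is the heart. For a $k$-uniform hypergraph with $d_i$ the number of edges containing $i$, the Laplacian tensor $\mathcal L=\mathcal D-\mathcal A$ ($\mathcal D$ diagonal with entries $d_i$, $\mathcal A$ with entries $\frac1{(k-1)!}$ at index tuples forming an edge and $0$ otherwise) satisfies $(\mathcal L\mathbf x^{k-1})_i=d_ix_i^{k-1}-\sum_{e\in E,\,i\in e}\prod_{s\in e\setminus\{i\}}x_s$. A real $\lambda$ is an H-eigenvalue of $\mathcal L$ with H-eigenvector $\mathbf x\in\mathbb R^n\setminus\{0\}$ if $(\mathcal L\mathbf x^{k-1})_i=\lambda x_i^{k-1}$ for all $i\in[n]$. *)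

From HB Require Import structures.
From mathcomp Require Import all_boot all_order all_algebra.
From mathcomp Require Import reals.
Set Implicit Arguments. Unset Strict Implicit. Unset Printing Implicit Defensive.
Import Order.TTheory GRing.Theory Num.Theory.
Local Open Scope ring_scope.

(* E is a k-uniform hyperstar of size d with heart h:
   V = {h} ⊔ V_1 ⊔ ... ⊔ V_d with |V_i| = k-1 and edges {h} ∪ V_i. *)
Definition is_hyperstar (n k d : nat) (E : {set {set 'I_n}}) (h : 'I_n) : Prop :=
  [/\ #|E| = d,
      (forall e, e \in E -> #|e| = k /\ h \in e),
      (forall e1 e2, e1 \in E -> e2 \in E -> e1 != e2 -> e1 :&: e2 = [set h])
    & (forall v : 'I_n, exists2 e, e \in E & v \in e)].

Definition hdeg (n : nat) (E : {set {set 'I_n}}) (i : 'I_n) : nat :=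
  #|[set e in E | i \in e]|.

(* (L x^{k-1})_i = d_i x_i^{k-1} - sum_{e in E, i in e} prod_{s in e \ {i}} x_s *)
Definition lap_apply (R : pzRingType) (n k : nat) (E : {set {set 'I_n}})
  (x : 'I_n -> R) (i : 'I_n) : R :=
  (hdeg E i)%:R * x i ^+ (k.-1)
  - \sum_(e in E | i \in e) \prod_(s in e | s != i) x s.

Definition is_H_eigenpair (R : pzRingType) (n k : nat) (E : {set {set 'I_n}})
  (lam : R) (x : 'I_n -> R) : Prop :=
  (exists i, x i != 0) /\ (forall i, lap_apply k E x i = lam * x i ^+ (k.-1)).

Definition is_H_eigenvalue (R : pzRingType) (n k : nat) (E : {set {set 'I_n}})
  (lam : R) : Prop :=
  exists x : 'I_n -> R, is_H_eigenpair k E lam x.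

Definition fr (R : pzRingType) (k d r : nat) (lam : R) : R :=
  (lam - d%:R) * (1 - lam) ^+ (k.-1) + r%:R.

Definition star_vec (R : pzRingType) (n : nat) (h : 'I_n) (S : {set {set 'I_n}})
  (lam : R) (j : 'I_n) : R :=
  if j == h then 1 - lam
  else if [exists e in S, j \in e] then 1 else 0.

From HB Require Import structures.
From mathcomp Require Import all_boot all_order all_algebra.
From mathcomp Require Import reals.
From mathcomp Require Import ring.
Import Order.TTheory GRing.Theory Num.Theory.
Local Open Scope ring_scope.
Set Implicit Arguments.
Unset Strict Implicit.

(* For [lam != 1] the eigen-equation at a non-heart vertex [s] of an edge [e]
   says (1 - lam) x_s^(k-1) = prod_(t in e, t != s) x_t, so (1 - lam) x_s^k is
   the same number for every non-heart [s] in [e].  As [k] is odd, all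
   non-heart entries of an edge coincide, and the equation at such a vertex
   then forces them to be either 0 or x_heart / (1 - lam): every H-eigenvector
   is a nonzero multiple of a star vector.  Conversely, a star vector built on
   [r] edges satisfies every non-heart equation identically (this uses
   [k >= 3]), while its heart equation is exactly f_r(lam) = 0. *)

Lemma expr_odd_inj (R : realDomainType) (p : nat) :
  odd p -> injective (fun x : R => x ^+ p).
Proof.
move=> p_odd a b /= eq_ab.
have p_gt0 : (0 < p)%N by rewrite lt0n; apply: contraTneq p_odd => ->.
have root0 (x : R) : x ^+ p = 0 -> x = 0.
  by move/eqP; rewrite expf_eq0 => /andP[_ /eqP].
have [a0|a_neq0] := eqVneq a 0.
  by rewrite a0 (root0 b) // -eq_ab a0 expr0n gtn_eqF.
have b_neq0 : b != 0.
  by apply: contra_neq a_neq0 => b0; apply: root0; rewrite eq_ab b0 expr0n gtn_eqF.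
have norm_ab : `|a| = `|b|.
  by apply/eqP; rewrite -(eqrXn2 p_gt0) ?normr_ge0 // -!normrX eq_ab.
have sg_odd (x : R) : x != 0 -> Num.sg x ^+ p = Num.sg x.
  by move=> ?; rewrite sgr_odd // p_odd.
have sg_ab : Num.sg a = Num.sg b.
  by rewrite -(sg_odd a) // -(sg_odd b) // -!sgrX eq_ab.
by rewrite [a]numEsg [b]numEsg sg_ab norm_ab.
Qed.

Lemma exists_subset_card (T : finType) (A : {set T}) (r : nat) :
  (r <= #|A|)%N -> exists2 B : {set T}, B \subset A & #|B| = r.
Proof.
elim: r => [|r IHr] r_lt; first by exists set0; rewrite ?sub0set ?cards0.
have [B sBA cardB] := IHr (ltnW r_lt).
have /subsetPn [a aA aB] : ~~ (A \subset B).
  by apply: contraTN r_lt => /subset_leq_card; rewrite cardB -leqNgt.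
by exists (a |: B); rewrite ?subUset ?sub1set ?aA // cardsU1 aB cardB.
Qed.

Lemma fr_inj (R : numDomainType) (k d r1 r2 : nat) (lam : R) :
  fr k d r1 lam = fr k d r2 lam -> r1 = r2.
Proof. by move/addrI/eqP; rewrite eqr_nat => /eqP. Qed.

Lemma eq_lap_apply (R : pzRingType) (n k : nat) (E : {set {set 'I_n}}) (x y : 'I_n -> R) :
  x =1 y -> lap_apply k E x =1 lap_apply k E y.
Proof.
move=> xy i; rewrite /lap_apply xy; congr (_ - _).
by apply: eq_bigr => e _; apply: eq_bigr.
Qed.

Lemma eq_H_eigenpair (R : pzRingType) (n k : nat) (E : {set {set 'I_n}}) (lam : R)
    (x y : 'I_n -> R) :
  x =1 y -> is_H_eigenpair k E lam x <-> is_H_eigenpair k E lam y.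
Proof.
have transfer (u v : 'I_n -> R) :
    u =1 v -> is_H_eigenpair k E lam u -> is_H_eigenpair k E lam v.
  move=> uv [[i ui_neq0] eigen]; split; first by exists i; rewrite -uv.
  by move=> j; rewrite -(eq_lap_apply _ _ uv) eigen uv.
by move=> xy; split; apply: transfer.
Qed.

Section Hyperstar.

Variables (n k d : nat) (E : {set {set 'I_n}}) (h : 'I_n).
Hypothesis star : is_hyperstar k d E h.

Lemma hyperstar_edge_heart e : e \in E -> h \in e.
Proof. by case: star => _ edges _ _ /edges[]. Qed.

Lemma hyperstar_edges_through j e :
  j != h -> e \in E -> j \in e -> [set e' in E | j \in e'] = [set e].
Proof.
move=> jh eE je; have [_ _ meet _] := star.
apply/setP => e'; rewrite !inE; apply/andP/eqP => [[e'E je']|->]; last by [].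
apply/eqP; apply: contraNT jh => ne.
by move: (meet _ _ e'E eE ne) => /setP/(_ j); rewrite !inE je je'; case: (j == h).
Qed.

Lemma hdeg_heart : hdeg E h = d.
Proof.
case: star => <- _ _ _; apply: eq_card => e; rewrite inE.
by case eE: (e \in E); rewrite //= hyperstar_edge_heart.
Qed.

Lemma card_edge_heartless e : e \in E -> #|e :\ h| = k.-1.
Proof.
case: star => _ edges _ _ /edges[card_e he].
by rewrite -card_e (cardsD1 h e) he.
Qed.

Lemma card_edge_heartless2 e j :
  e \in E -> j \in e -> j != h -> #|e :\ h :\ j| = k.-2.
Proof.
move=> eE je jh; have := card_edge_heartless eE.
by rewrite (cardsD1 j) !inE jh je add1n => <-.
Qed.

Lemma lap_apply_nonheart (R : pzRingType) (x : 'I_n -> R) j e :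
  j != h -> e \in E -> j \in e ->
  lap_apply k E x j = x j ^+ k.-1 - \prod_(s in e | s != j) x s.
Proof.
move=> jh eE je; have edges_j := hyperstar_edges_through jh eE je.
rewrite /lap_apply /hdeg edges_j cards1 mul1r (big_pred1 e) // => e'.
by move: edges_j => /setP/(_ e'); rewrite !inE.
Qed.

Lemma lap_apply_heart (R : pzRingType) (x : 'I_n -> R) :
  lap_apply k E x h = d%:R * x h ^+ k.-1 - \sum_(e in E) \prod_(s in e :\ h) x s.
Proof.
rewrite /lap_apply hdeg_heart; congr (_ - _).
rewrite [RHS](eq_bigl (fun e => (e \in E) && (h \in e))); last first.
  by move=> e; case eE: (e \in E); rewrite //= hyperstar_edge_heart.
by apply: eq_bigr => e _; apply: eq_bigl => s; rewrite !inE andbC.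
Qed.

Lemma star_vec_edge (R : pzRingType) (S : {set {set 'I_n}}) (lam : R) e s :
  S \subset E -> e \in E -> s \in e -> s != h -> star_vec h S lam s = (e \in S)%:R.
Proof.
move=> sSE eE se sh; rewrite /star_vec (negbTE sh).
suff -> : [exists e' in S, s \in e'] = (e \in S) by case: (e \in S).
apply/existsP/idP => [[e' /andP[e'S se']]|eS]; last by exists e; rewrite eS.
have : e' \in [set e' in E | s \in e'] by rewrite inE (subsetP sSE).
by rewrite (hyperstar_edges_through sh eE se) inE => /eqP <-.
Qed.

Lemma prod_edge_nonheart (R : comPzRingType) (x : 'I_n -> R) e j :
  e \in E -> j \in e -> j != h ->
  \prod_(s in e | s != j) x s = x h * \prod_(s in e :\ h :\ j) x s.
Proof.
move=> eE je jh; rewrite (bigD1 h) /=; last by rewrite hyperstar_edge_heart // eq_sym.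
congr (_ * _); apply: eq_bigl => s; rewrite !inE.
by case: (s \in e); case: (s == j); case: (s == h).
Qed.

Hypothesis k_gt2 : (2 < k)%N.

Let k2_gt0 : (0 < k.-2)%N. Proof. by rewrite !ltn_predRL. Qed.

Lemma expr_pred_k (R : pzSemiRingType) (y : R) : y ^+ k.-1 = y * y ^+ k.-2.
Proof. by rewrite -exprS prednK // ltn_predRL ltnW. Qed.

Lemma lap_star_vec_nonheart (R : comPzRingType) (S : {set {set 'I_n}}) (c lam : R) j :
  S \subset E -> j != h ->
  lap_apply k E (fun i => c * star_vec h S lam i) j
    = lam * (c * star_vec h S lam j) ^+ k.-1.
Proof.
move=> sSE jh; have [_ _ _ cover] := star; have [e eE je] := cover j.
rewrite (lap_apply_nonheart _ jh eE je) (prod_edge_nonheart _ eE je jh).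
rewrite (eq_bigr (fun=> c * (e \in S)%:R)); last first.
  by move=> s; rewrite !inE => /and3P[_ sh se]; rewrite (star_vec_edge _ sSE eE).
rewrite prodr_const (card_edge_heartless2 eE je jh) (star_vec_edge _ sSE eE je jh).
rewrite /star_vec eqxx !expr_pred_k.
by case: (e \in S); rewrite ?mulr1 ?mulr0 ?mul0r ?expr0n ?(gtn_eqF k2_gt0) /=; ring.
Qed.

Lemma lap_star_vec_heart (R : comPzRingType) (S : {set {set 'I_n}}) (c lam : R) :
  S \subset E ->
  lap_apply k E (fun i => c * star_vec h S lam i) h
    - lam * (c * star_vec h S lam h) ^+ k.-1 = - (c ^+ k.-1 * fr k d #|S| lam).
Proof.
move=> sSE; rewrite lap_apply_heart.
have k1_gt0 : (0 < k.-1)%N by rewrite ltn_predRL ltnW.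
rewrite (eq_bigr (fun e => if e \in S then c ^+ k.-1 else 0)); last first.
  move=> e eE; rewrite (eq_bigr (fun=> c * (e \in S)%:R)); last first.
    by move=> s; rewrite !inE => /andP[sh se]; rewrite (star_vec_edge _ sSE eE).
  by rewrite prodr_const (card_edge_heartless eE); case: (e \in S);
    rewrite ?mulr1 ?mulr0 ?expr0n ?gtn_eqF.
rewrite -big_mkcondr (eq_bigl (mem S)); last first.
  by move=> e /=; case eS: (e \in S); rewrite ?andbT ?andbF // (subsetP sSE).
rewrite sumr_const /star_vec eqxx /fr -[_ *+ #|S|]mulr_natr exprMn.
ring.
Qed.

Lemma star_vec_eigenpair (R : idomainType) (S : {set {set 'I_n}}) (c lam : R) :
  S \subset E -> c != 0 -> lam != 1 ->
  is_H_eigenpair k E lam (fun i => c * star_vec h S lam i) <-> fr k d #|S| lam = 0.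
Proof.
move=> sSE c_neq0 lam_neq1; have heart := lap_star_vec_heart c lam sSE.
split=> [[_ eigen]|fr0].
  apply/eqP; move: heart; rewrite eigen subrr => /esym/eqP.
  by rewrite oppr_eq0 mulf_eq0 expf_eq0 (negbTE c_neq0) andbF.
split; first by exists h; rewrite /star_vec eqxx mulf_neq0 // subr_eq0 eq_sym.
move=> i; have [->|ih] := eqVneq i h; last exact: lap_star_vec_nonheart.
by apply/eqP; rewrite -subr_eq0 heart fr0 mulr0 oppr0.
Qed.

Section Eigenvectors.

Variables (R : realFieldType) (lam : R) (x : 'I_n -> R).
Hypotheses (k_odd : odd k) (lam_neq1 : lam != 1).
Hypothesis eigen : forall i, lap_apply k E x i = lam * x i ^+ k.-1.

Let one_sub_lam_neq0 : 1 - lam != 0. Proof. by rewrite subr_eq0 eq_sym. Qed.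

Lemma eigen_prod_edge e s : e \in E -> s \in e :\ h ->
  \prod_(t in e | t != s) x t = (1 - lam) * x s ^+ k.-1.
Proof.
move=> eE; rewrite !inE => /andP[sh se].
by have := eigen s; rewrite (lap_apply_nonheart _ sh eE se) mulrBl mul1r => <-; ring.
Qed.

Lemma eigen_edge_const e : e \in E ->
  forall s1 s2, s1 \in e :\ h -> s2 \in e :\ h -> x s1 = x s2.
Proof.
move=> eE s1 s2 s1e s2e.
have prod_e s : s \in e :\ h -> \prod_(t in e) x t = (1 - lam) * x s ^+ k.
  move=> se; rewrite (bigD1 s) /=; last by move: se; rewrite inE => /andP[].
  by rewrite eigen_prod_edge // mulrCA -exprS prednK // (@ltn_trans 2).
by apply: (expr_odd_inj k_odd); apply: (mulfI one_sub_lam_neq0); rewrite -!prod_e.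
Qed.

Lemma eigen_heart_edge e j : e \in E -> j \in e :\ h -> x j != 0 ->
  x h = (1 - lam) * x j.
Proof.
move=> eE je xj_neq0; have /setD1P[jh je'] := je.
have := eigen_prod_edge eE je; rewrite (prod_edge_nonheart _ eE je' jh).
rewrite (eq_bigr (fun=> x j)); last first.
  by move=> s /setD1P[_ se]; exact: (eigen_edge_const eE se je).
rewrite prodr_const (card_edge_heartless2 eE je' jh) expr_pred_k mulrA.
exact/mulIf/expf_neq0.
Qed.

End Eigenvectors.

Lemma H_eigenpair_star_vec (R : realFieldType) (lam : R) (x : 'I_n -> R) :
  odd k -> lam != 1 -> is_H_eigenpair k E lam x ->
  exists (c : R) (S : {set {set 'I_n}}),
    [/\ c != 0, S \subset E & forall j, x j = c * star_vec h S lam j].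
Proof.
move=> k_odd lam_neq1 [[i xi_neq0] eigen].
pose c := x h / (1 - lam); pose S := [set e in E | [exists s in e :\ h, x s != 0]].
have sSE : S \subset E by apply/subsetP => e; rewrite inE => /andP[].
have x_star j : x j = c * star_vec h S lam j.
  have [->|jh] := eqVneq j h; first by rewrite /star_vec eqxx divfK // subr_eq0 eq_sym.
  have [_ _ _ cover] := star; have [e eE je] := cover j.
  have je' : j \in e :\ h by rewrite !inE jh.
  rewrite (star_vec_edge _ sSE eE je jh) inE eE /=.
  case: existsP => [[s /andP[se xs_neq0]]|no_support]; last first.
    rewrite mulr0; apply/eqP/negPn/negP => xj_neq0.
    by apply: no_support; exists j; rewrite je'.
  rewrite mulr1 /c (eigen_heart_edge k_odd lam_neq1 eigen eE se xs_neq0) mulrC mulKf.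
    exact: (eigen_edge_const k_odd lam_neq1 eigen eE).
  by rewrite subr_eq0 eq_sym.
exists c, S; split=> //; apply: contra_neq xi_neq0 => c0.
by rewrite x_star c0 mul0r.
Qed.

End Hyperstar.

Theorem proposition5p1 (R : realType) (k d n : nat) (E : {set {set 'I_n.+1}}) :
  odd k -> (3 <= k)%N -> (2 <= d)%N -> is_hyperstar k d E ord0 ->
  (forall lam : R, lam != 1 ->
     (is_H_eigenvalue k E lam <-> exists2 r : nat, (r <= d)%N & fr k d r lam = 0))
  /\
  (forall (r : nat) (lam : R), (r <= d)%N -> lam != 1 -> fr k d r lam = 0 ->
     forall x : 'I_n.+1 -> R,
       is_H_eigenpair k E lam x <->
       exists c : R, exists S : {set {set 'I_n.+1}},
         [/\ c != 0, S \subset E, #|S| = r &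
             forall j, x j = c * star_vec ord0 S lam j]).
Proof.
move=> k_odd k_gt2 _ star; have cardE : #|E| = d by case: star.
have classify := H_eigenpair_star_vec star k_gt2 k_odd.
have star_eigen := star_vec_eigenpair star k_gt2.
split=> [lam lam_neq1|r lam r_le_d lam_neq1 fr0 x]; split.
- case=> x x_eigen; have [c [S [c_neq0 sSE x_star]]] := classify _ _ _ lam_neq1 x_eigen.
  exists #|S|; first by rewrite -cardE subset_leq_card.
  by apply/(star_eigen _ _ _ _ sSE c_neq0 lam_neq1)/(eq_H_eigenpair k E lam x_star).
- case=> r r_le_d fr0.
  have [S sSE cardS] : exists2 S : {set {set 'I_n.+1}}, S \subset E & #|S| = r.
    by rewrite -cardE in r_le_d; exact: exists_subset_card.
  exists (fun i => 1 * star_vec ord0 S lam i).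
  by apply/(star_eigen _ _ _ _ sSE (oner_neq0 R) lam_neq1); rewrite cardS.
- move=> x_eigen; have [c [S [c_neq0 sSE x_star]]] := classify _ _ _ lam_neq1 x_eigen.
  exists c, S; split=> //; apply: (fr_inj (k := k) (d := d) (lam := lam)); rewrite fr0.
  by apply/(star_eigen _ _ _ _ sSE c_neq0 lam_neq1)/(eq_H_eigenpair k E lam x_star).
- case=> c [S [c_neq0 sSE cardS x_star]]; apply/(eq_H_eigenpair k E lam x_star).
  by apply/(star_eigen _ _ _ _ sSE c_neq0 lam_neq1); rewrite cardS.
Qed.
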